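(* Consider a single end device (node) in the time-slotted uplink system described in the context, with status-update arrival rate $\lambda\in(0,1]$, and put $\gamma=1-\lambda$. Let $k,m$ be positive integers. Suppose that in slot $t$ the node is scheduled and its transmission succeeds, so that the access point (AP) observes the local age $d_t=k$, and suppose that the AP does not successfully receive any packet from this node in any of the slots $t+1,\dots,t+m-1$. Then the destination AoI of the node satisfies $D_{t+m}=k+m$, and the conditional distribution of the local age $d_{t+m}$ given the AP's history of actions and observations (through slot $t+m-1$) is the vector $\bm{c}(k,m)=[c_{k,m}(d)]_{d=1,2,\dots}$ given by $$\bm{c}(k,m)=\left[\lambda,\lambda\gamma,\lambda\gamma^2,\dots,\lambda\gamma^{m-1},0,\dots,0,\gamma^m,0,\dots\right],$$ i.e. $c_{k,m}(d)=\lambda\gamma^{d-1}$ for $1\le d\le m$, $c_{k,m}(k+m)=\gamma^m$, and $c_{k,m}(d)=0$ for all other $d\ge 1$.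
   Context: System model: time is slotted, $t=0,1,2,\dots$. A node receives a new status update in each slot independently with probability $\lambda$ (Bernoulli arrivals) and keeps only the latest one. Its local age $d_t$ (system time of the latest update at the node) evolves as $d_{t+1}=1$ if an update arrives in slot $t$ and $d_{t+1}=d_t+1$ otherwise. In each slot the AP either schedules the node or not; if scheduled, the transmission succeeds with some probability $p\in(0,1]$ independently of everything else. If the node is scheduled and the transmission succeeds in slot $t$, the AP observes $d_t$ and the destination AoI becomes $D_{t+1}=d_t+1$; otherwise the AP observes nothing about $d_t$ and $D_{t+1}=D_t+1$. The AP's scheduling decisions may depend on its past actions and observations, but the AP never observes the arrivals directly. *)

From mathcomp Require Import all_boot all_order all_algebra.
Set Implicit Arguments. Unset Strict Implicit. Unset Printing Implicit Defensive.
Import Order.TTheory GRing.Theory Num.Theory.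
Local Open Scope ring_scope.

Definition slot := (bool * bool * bool)%type.
Definition slot0 : slot := (false, false, false).
Definition arr (e : slot) : bool := e.1.1.
Definition sch (e : slot) : bool := e.1.2.
Definition suc (e : slot) : bool := e.2.

(* AP-side record of one slot: (action, observation). *)
Definition hentry := (bool * option nat)%type.
Definition hentry0 : hentry := (false, None).

Definition step_d (d : nat) (e : slot) : nat := if arr e then 1%N else d.+1.
(* d_s given initial local age d0 and the outcomes of slots 0..s-1 *)
Definition age_at (d0 : nat) (w : seq slot) (s : nat) : nat :=
  foldl step_d d0 (take s w).

Definition obs_at (d0 : nat) (w : seq slot) (r : nat) : option nat :=
  let e := nth slot0 w r in
  if sch e && suc e then Some (age_at d0 w r) else None.

Definition hist (d0 : nat) (w : seq slot) (s : nat) : seq hentry :=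
  [seq (sch (nth slot0 w r), obs_at d0 w r) | r <- iota 0 s].

Definition Dage (D0 : nat) (h : seq hentry) : nat :=
  foldl (fun D (o : hentry) => match o.2 with Some d => d.+1 | None => D.+1 end) D0 h.

(* Probability weight of slot r of trajectory w: Bernoulli(lam) arrival,
   randomized scheduling policy pol (probability of scheduling given the
   AP's past history), success with probability p if scheduled. *)
Definition slot_weight (R : realFieldType) (lam p : R) (pol : seq hentry -> R)
  (d0 : nat) (w : seq slot) (r : nat) : R :=
  let e := nth slot0 w r in
  let q := pol (hist d0 w r) in
  (if arr e then lam else 1 - lam) *
  (if sch e then q * (if suc e then p else 1 - p)
   else (1 - q) * (if suc e then 0 else 1)).

Definition weight (R : realFieldType) (lam p : R) (pol : seq hentry -> R)
  (d0 : nat) (w : seq slot) : R :=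
  \prod_(r < size w) slot_weight lam p pol d0 w r.

Definition Prob (R : realFieldType) (lam p : R) (pol : seq hentry -> R)
  (d0 N : nat) (E : pred (seq slot)) : R :=
  \sum_(w : N.-tuple slot | E w) weight lam p pol d0 w.

Definition cvec (R : realFieldType) (lam : R) (k m d : nat) : R :=
  if (1 <= d <= m)%N then lam * (1 - lam) ^+ d.-1
  else if d == (k + m)%N then (1 - lam) ^+ m else 0.

From mathcomp Require Import all_boot all_order all_algebra.
From mathcomp Require Import ring zify.
Import Order.TTheory GRing.Theory Num.Theory.

Set Implicit Arguments.
Unset Strict Implicit.
Unset Printing Implicit Defensive.

(** After the successful transmission in slot [t] the AP knows [d_t = k] and
   then observes nothing until slot [t + m]: its actions and (failed)
   observations in slots [t+1 .. t+m-1] do not depend on the arrivals of slots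
   [t .. t+m-1].  Replacing those [m] arrival bits of a trajectory therefore
   leaves the AP history unchanged and multiplies the probability weight by a
   product of independent Bernoulli(lam) factors.  Conditioned on the history,
   these [m] bits are thus still i.i.d. Bernoulli(lam), and [d_(t+m)] is
   [m - i] if the last arrival occurs in slot [t + i], or [k + m] if there is
   no arrival at all: this is [c(k,m)]. *)

Section Trajectory.
Variable d0 : nat.

Lemma age_atS (w : seq slot) s : (s < size w)%N ->
  age_at d0 w s.+1 = step_d (age_at d0 w s) (nth slot0 w s).
Proof. by move=> ltsw; rewrite /age_at (take_nth slot0 ltsw) foldl_rcons. Qed.

Lemma eq_age_at (w w' : seq slot) s : (s <= size w)%N -> (s <= size w')%N ->
  (forall r, (r < s)%N -> arr (nth slot0 w r) = arr (nth slot0 w' r)) ->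
  age_at d0 w s = age_at d0 w' s.
Proof.
elim: s => [|s IHs] lesw lesw' eq_arr; first by rewrite /age_at !take0.
have eq_arr_s r : (r < s)%N -> arr (nth slot0 w r) = arr (nth slot0 w' r).
  by move=> ltrs; apply/eq_arr/ltnW.
by rewrite !age_atS // IHs ?(ltnW lesw) ?(ltnW lesw') // /step_d eq_arr.
Qed.

Lemma hist_take w s s' : (s <= s')%N -> hist d0 w s = take s (hist d0 w s').
Proof. by move=> less'; rewrite /hist -map_take take_iota (minn_idPl less'). Qed.

Lemma nth_hist w s r : (r < s)%N ->
  nth hentry0 (hist d0 w s) r = (sch (nth slot0 w r), obs_at d0 w r).
Proof. by move=> ltrs; rewrite /hist (nth_map 0%N) ?size_iota // nth_iota. Qed.

Lemma eq_hist w w' s :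
  (forall r, (r < s)%N -> sch (nth slot0 w r) = sch (nth slot0 w' r)) ->
  (forall r, (r < s)%N -> obs_at d0 w r = obs_at d0 w' r) ->
  hist d0 w s = hist d0 w' s.
Proof.
move=> eq_sch eq_obs; apply/eq_in_map => r; rewrite mem_iota add0n => ltrs.
by rewrite eq_sch ?eq_obs.
Qed.

End Trajectory.

Section ArrivalReplacement.
Variables (t : nat) (w : seq slot).

Definition set_arrivals (a : seq bool) : seq slot :=
  mkseq (fun r => let e := nth slot0 w r in
    if (t <= r)%N then (nth false a (r - t), sch e, suc e) else e) (size w).

Definition arrivals (m : nat) : seq bool :=
  mkseq (fun i => arr (nth slot0 w (t + i))) m.

Lemma size_set_arrivals a : size (set_arrivals a) = size w.
Proof. exact: size_mkseq. Qed.

Variables (a : seq bool) (r : nat).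
Hypothesis ltrw : (r < size w)%N.

Lemma nth_set_arrivals : nth slot0 (set_arrivals a) r =
  if (t <= r)%N then (nth false a (r - t), sch (nth slot0 w r), suc (nth slot0 w r))
  else nth slot0 w r.
Proof. exact: nth_mkseq. Qed.

Lemma sch_set_arrivals : sch (nth slot0 (set_arrivals a) r) = sch (nth slot0 w r).
Proof. by rewrite nth_set_arrivals; case: ifP. Qed.

Lemma suc_set_arrivals : suc (nth slot0 (set_arrivals a) r) = suc (nth slot0 w r).
Proof. by rewrite nth_set_arrivals; case: ifP. Qed.

Lemma arr_set_arrivals : arr (nth slot0 (set_arrivals a) r) =
  if (t <= r)%N then nth false a (r - t) else arr (nth slot0 w r).
Proof. by rewrite nth_set_arrivals; case: ifP. Qed.

End ArrivalReplacement.

Section ArrivalReplacementTheory.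
Variables (t m : nat) (w : seq slot).
Hypothesis size_w : size w = (t + m)%N.

Lemma set_arrivals_id a a' :
  set_arrivals t (set_arrivals t w a) a' = set_arrivals t w a'.
Proof.
apply: (@eq_from_nth _ slot0); rewrite !size_set_arrivals // => r ltrw.
rewrite nth_set_arrivals ?size_set_arrivals // [RHS]nth_set_arrivals //.
case: ifP => letr; first by rewrite sch_set_arrivals ?suc_set_arrivals.
by rewrite nth_set_arrivals // letr.
Qed.

Lemma arrivalsK : set_arrivals t w (arrivals t w m) = w.
Proof.
apply: (@eq_from_nth _ slot0); rewrite ?size_set_arrivals // => r ltrw.
rewrite nth_set_arrivals //; case: ifP => // letr.
rewrite nth_mkseq ?subnKC //; last by rewrite ltn_subLR // -size_w.
by case: (nth slot0 w r) => [[]].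
Qed.

Lemma set_arrivalsK a : size a = m -> arrivals t (set_arrivals t w a) m = a.
Proof.
move=> size_a; apply: (@eq_from_nth _ false); rewrite ?size_mkseq // => i ltim.
by rewrite nth_mkseq // arr_set_arrivals ?size_w ?ltn_add2l // leq_addr addKn.
Qed.

Variable d0 : nat.

Lemma hist_set_arrivals a :
  (forall r, (t < r < t + m)%N -> obs_at d0 w r = None) ->
  hist d0 (set_arrivals t w a) (t + m) = hist d0 w (t + m).
Proof.
move=> unobserved; apply: eq_hist => r ltrtm; have ltrw : (r < size w)%N by rewrite size_w.
  exact: sch_set_arrivals.
rewrite /obs_at sch_set_arrivals // suc_set_arrivals //.
case: (leqP r t) => [lert | ltrt]; last first.
  by move: (unobserved r); rewrite ltrt ltrtm /obs_at => /(_ isT); case: ifP.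
rewrite (@eq_age_at d0 (set_arrivals t w a) w r) ?size_set_arrivals ?(ltnW ltrw) //.
move=> r' ltr'r; rewrite arr_set_arrivals ?(ltn_trans ltr'r) //.
by rewrite leqNgt (leq_trans ltr'r lert).
Qed.

End ArrivalReplacementTheory.

Definition age_after (k : nat) (a : seq bool) : nat :=
  foldl (fun d (b : bool) => if b then 1%N else d.+1) k a.

Lemma age_at_set_arrivals d0 t m w a : size w = (t + m)%N -> size a = m ->
  age_at d0 (set_arrivals t w a) (t + m) = age_after (age_at d0 w t) a.
Proof.
move=> size_w size_a.
suff age_prefix i : (i <= m)%N ->
    age_at d0 (set_arrivals t w a) (t + i) = age_after (age_at d0 w t) (take i a).
  by rewrite age_prefix // -size_a take_size.
elim: i => [|i IHi] leim.
  rewrite addn0 take0; apply: eq_age_at; rewrite ?size_set_arrivals ?size_w ?leq_addr //.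
  move=> r ltrt; rewrite arr_set_arrivals ?size_w ?(leq_trans ltrt (leq_addr _ _)) //.
  by rewrite leqNgt ltrt.
rewrite addnS age_atS ?size_set_arrivals ?size_w ?ltn_add2l // IHi ?(ltnW leim) //.
rewrite (take_nth false) ?size_a // /age_after foldl_rcons /step_d.
by rewrite arr_set_arrivals ?size_w ?ltn_add2l // leq_addr addKn.
Qed.

Lemma hist_unobserved d0 t m w h :
  hist d0 w (t + m) = h ->
  (forall r, (t < r < t + m)%N -> (nth hentry0 h r).2 = None) ->
  forall r, (t < r < t + m)%N -> obs_at d0 w r = None.
Proof.
move=> <- unobserved r /andP[ltrt ltrtm].
by move: (unobserved r); rewrite ltrt ltrtm nth_hist // => /(_ isT).
Qed.

Lemma age_at_observed d0 t m k w h : (0 < m)%N -> hist d0 w (t + m) = h ->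
  nth hentry0 h t = (true, Some k) -> age_at d0 w t = k.
Proof.
move=> m_gt0 <-; rewrite nth_hist /obs_at; last by rewrite -{1}[t]addn0 ltn_add2l.
by case: ifP => // _ [_ ->].
Qed.

Lemma Dage_unobserved D (s : seq hentry) :
  (forall e, e \in s -> e.2 = None) -> Dage D s = (D + size s)%N.
Proof.
elim: s D => [|e s IHs] D unobserved_s /=; first by rewrite addn0.
rewrite /Dage /= unobserved_s ?mem_head // -/(Dage _ _) IHs ?addSnnS // => e' s_e'.
by apply: unobserved_s; rewrite in_cons s_e' orbT.
Qed.

Lemma Dage_observed_last D s1 b k s2 : (forall e, e \in s2 -> e.2 = None) ->
  Dage D (s1 ++ (b, Some k) :: s2) = (k.+1 + size s2)%N.
Proof. by move=> unobserved_s2; rewrite /Dage foldl_cat /= -/(Dage _ _) Dage_unobserved. Qed.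

Lemma Dage_observed_at D h t m b k : size h = (t + m)%N ->
  nth hentry0 h t = (b, Some k) ->
  (forall r, (t < r < t + m)%N -> (nth hentry0 h r).2 = None) ->
  Dage D h = (k + m)%N.
Proof.
move=> size_h observed_t unobserved.
have ltth : (t < size h)%N.
  by rewrite ltnNge; apply/negP => /(nth_default hentry0); rewrite observed_t.
rewrite -(cat_take_drop t h) (drop_nth hentry0 ltth) observed_t Dage_observed_last.
  by rewrite size_drop size_h; lia.
move=> e /(nthP hentry0)[i]; rewrite size_drop size_h nth_drop => lti <-.
by apply: unobserved; lia.
Qed.

Local Open Scope ring_scope.

Definition bern (R : pzRingType) (lam : R) (b : bool) : R := if b then lam else 1 - lam.

Definition bern_prod (R : pzRingType) (lam : R) (n : nat) (a : seq bool) : R :=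
  \prod_(i < n) bern lam (nth false a i).

Definition sched_weight (R : pzRingType) (p q : R) (e : slot) : R :=
  if sch e then q * (if suc e then p else 1 - p)
  else (1 - q) * (if suc e then 0 else 1).

Section Weights.
Variables (R : realFieldType) (lam p : R) (pol : seq hentry -> R) (d0 : nat).

Definition frame_weight (t m : nat) (w : seq slot) : R :=
  (\prod_(r < t) bern lam (arr (nth slot0 w r))) *
  \prod_(r < t + m) sched_weight p (pol (hist d0 w r)) (nth slot0 w r).

Lemma weight_split w : weight lam p pol d0 w =
  (\prod_(r < size w) bern lam (arr (nth slot0 w r))) *
  \prod_(r < size w) sched_weight p (pol (hist d0 w r)) (nth slot0 w r).
Proof. by rewrite -big_split. Qed.

Lemma weight_set_arrivals t m w a : size w = (t + m)%N -> size a = m ->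
  (forall r, (t < r < t + m)%N -> obs_at d0 w r = None) ->
  weight lam p pol d0 (set_arrivals t w a) = frame_weight t m w * bern_prod lam m a.
Proof.
move=> size_w size_a unobserved.
rewrite weight_split size_set_arrivals size_w /frame_weight mulrAC; congr (_ * _).
  rewrite big_split_ord /bern_prod; congr (_ * _); apply: eq_bigr => i _ /=.
    rewrite arr_set_arrivals ?size_w ?(leq_trans (ltn_ord i) (leq_addr _ _)) //.
    by rewrite leqNgt ltn_ord.
  by rewrite arr_set_arrivals ?size_w ?ltn_add2l // leq_addr addKn.
apply: eq_bigr => r _; have ltrw : (r < size w)%N by rewrite size_w.
have lertm : (r <= t + m)%N := ltnW (ltn_ord r).
rewrite (hist_take _ _ lertm) [in RHS](hist_take _ _ lertm) hist_set_arrivals //.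
by rewrite /sched_weight sch_set_arrivals // suc_set_arrivals.
Qed.

End Weights.

Section TupleDecomposition.
Variables t m : nat.

Lemma set_arrivals_tupleP (w : (t + m).-tuple slot) (a : seq bool) :
  size (set_arrivals t w a) == (t + m)%N.
Proof. by rewrite size_set_arrivals size_tuple. Qed.

Definition set_arrivals_tuple (w : (t + m).-tuple slot) (a : m.-tuple bool) :=
  Tuple (set_arrivals_tupleP w a).

Lemma arrivals_tupleP (w : seq slot) : size (arrivals t w m) == m.
Proof. by rewrite size_mkseq. Qed.

Definition arrivals_tuple (w : seq slot) := Tuple (arrivals_tupleP w).

Definition frame (w : (t + m).-tuple slot) := set_arrivals_tuple w (nseq_tuple m false).

Lemma sum_over_arrivals (V : nmodType) (F : (t + m).-tuple slot -> V) :
  \sum_w F w = \sum_(b | frame b == b) \sum_(a : m.-tuple bool) F (set_arrivals_tuple b a).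
Proof.
rewrite (partition_big frame (fun b => frame b == b)) => [|w _]; last first.
  by apply/eqP/val_inj; rewrite /= set_arrivals_id.
apply: eq_bigr => b /eqP frame_b.
rewrite (reindex_onto (set_arrivals_tuple b) arrivals_tuple) => [|w /eqP <-]; last first.
  by apply/val_inj; rewrite /= set_arrivals_id arrivalsK ?size_tuple.
apply: eq_bigl => a; apply/andP; split.
  by rewrite -{2}frame_b; apply/eqP/val_inj; rewrite /= set_arrivals_id.
by apply/eqP/val_inj; rewrite /= set_arrivalsK ?size_tuple.
Qed.

End TupleDecomposition.

Lemma sum_tuple_cons (V : nmodType) n (F : n.+1.-tuple bool -> V) :
  \sum_a F a = \sum_(b : bool) \sum_(a : n.-tuple bool) F [tuple of b :: a].
Proof.
rewrite pair_big /= (reindex (fun ba : bool * n.-tuple bool => [tuple of ba.1 :: ba.2])) //.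
exists (fun a : n.+1.-tuple bool => (thead a, [tuple of behead a])) => [[b a]|a] _ /=.
  by rewrite theadE; congr pair; apply/val_inj.
by rewrite -tuple_eta.
Qed.

Lemma bern_prod_cons (R : pzRingType) (lam : R) n b a :
  bern_prod lam n.+1 (b :: a) = bern lam b * bern_prod lam n a.
Proof. by rewrite /bern_prod big_ord_recl. Qed.

Lemma sum_bern_prod (R : pzRingType) (lam : R) n :
  \sum_(a : n.-tuple bool) bern_prod lam n a = 1.
Proof.
elim: n => [|n IHn].
  by rewrite (eq_bigr (fun=> 1)) ?sumr_const ?card_tuple // => a _; apply: big_ord0.
rewrite sum_tuple_cons big_bool /=.
under eq_bigr do rewrite bern_prod_cons.
under [X in _ + X]eq_bigr do rewrite bern_prod_cons.
by rewrite -!big_distrr /= IHn !mulr1 addrC subrK.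
Qed.

Lemma cvecS (R : realFieldType) (lam : R) k n d : (0 < k)%N ->
  cvec lam k n.+1 d = lam * cvec lam 1 n d + (1 - lam) * cvec lam k.+1 n d.
Proof.
move=> k_gt0; rewrite /cvec; case: d => [|d]; first by rewrite add1n addSn addnS /=; ring.
rewrite add1n addSn addnS !eqSS /= !ltnS.
case: (ltngtP d n) => [ltdn | ltnd | ->] /=; first by ring.
  by case: eqP => _; rewrite ?exprS; ring.
have -> : (n == k + n)%N = false by lia.
by ring.
Qed.

Lemma age_after_distribution (R : realFieldType) (lam : R) n k d : (0 < k)%N ->
  \sum_(a : n.-tuple bool | age_after k a == d) bern_prod lam n a = cvec lam k n d.
Proof.
elim: n k => [|n IHn] k k_gt0.
  have -> : cvec lam k 0 d = (k == d)%:R.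
    by rewrite /cvec addn0 eq_sym; case: d => [|d] /=; case: eqP.
  rewrite (eq_bigl (fun=> k == d)) => [|a]; last by rewrite tuple0.
  by case: eqP => _; rewrite ?sum_bern_prod ?big_pred0.
rewrite big_mkcond sum_tuple_cons big_bool /= cvecS //.
under eq_bigr do rewrite bern_prod_cons -(mulr0 (bern lam true)) -fun_if.
under [X in _ + X]eq_bigr do rewrite bern_prod_cons -(mulr0 (bern lam false)) -fun_if.
by rewrite -!big_distrr /= -!big_mkcond !IHn.
Qed.

Section Posterior.
Variables (R : realFieldType) (lam p : R) (pol : seq hentry -> R).
Variables (d0 t m k : nat) (h : seq hentry).
Hypothesis m_gt0 : (0 < m)%N.
Hypothesis observed_t : nth hentry0 h t = (true, Some k).
Hypothesis unobserved : forall r, (t < r < t + m)%N -> (nth hentry0 h r).2 = None.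

Lemma hist_set_arrivals_eqE w a : size w = (t + m)%N ->
  (hist d0 (set_arrivals t w a) (t + m) == h) = (hist d0 w (t + m) == h).
Proof.
move=> size_w; apply/eqP/eqP => hist_w; last first.
  by rewrite hist_set_arrivals //; apply: hist_unobserved hist_w unobserved.
have size_wa : size (set_arrivals t w a) = (t + m)%N by rewrite size_set_arrivals.
rewrite -(arrivalsK size_w) -(set_arrivals_id t w a) hist_set_arrivals //.
exact: hist_unobserved hist_w unobserved.
Qed.

Definition frame_mass : R :=
  \sum_(b : (t + m).-tuple slot | frame b == b)
    (if hist d0 b (t + m) == h then frame_weight lam p pol d0 t m b else 0).

Lemma Prob_hist_age (P : pred nat) :
  Prob lam p pol d0 (t + m) (fun w => (hist d0 w (t + m) == h) && P (age_at d0 w (t + m)))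
  = frame_mass * \sum_(a : m.-tuple bool | P (age_after k a)) bern_prod lam m a.
Proof.
rewrite /Prob /frame_mass big_mkcond sum_over_arrivals big_distrl /=.
apply: eq_bigr => b _; have size_b : size b = (t + m)%N by rewrite size_tuple.
under eq_bigr => a _ do rewrite hist_set_arrivals_eqE //.
have [hist_b | _] := eqVneq (hist d0 b (t + m)) h; last by rewrite mul0r big1.
have unobserved_b := hist_unobserved hist_b unobserved.
rewrite big_distrr [RHS]big_mkcond /=; apply: eq_bigr => a _.
rewrite age_at_set_arrivals ?size_tuple // (age_at_observed m_gt0 hist_b observed_t).
case: (P _); rewrite ?mulr0 //.
by rewrite (weight_set_arrivals _ _ _ size_b (size_tuple a) unobserved_b).
Qed.

Lemma Prob_hist :
  Prob lam p pol d0 (t + m) (fun w => hist d0 w (t + m) == h) = frame_mass.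
Proof.
rewrite -[RHS]mulr1 -(sum_bern_prod lam m) -(Prob_hist_age predT).
by apply: eq_bigl => w; rewrite andbT.
Qed.

End Posterior.

Theorem proposition1 (R : realFieldType) (lam p : R) (pol : seq hentry -> R)
  (d0 D0 k m t : nat) (h : seq hentry) :
  0 < lam <= 1 -> 0 < p <= 1 -> (forall h', 0 <= pol h' <= 1) ->
  (0 < k)%N -> (0 < m)%N ->
  size h = (t + m)%N ->
  nth hentry0 h t = (true, Some k) ->
  (forall r, (t < r < t + m)%N -> (nth hentry0 h r).2 = None) ->
  0 < Prob lam p pol d0 (t + m) (fun w => hist d0 w (t + m) == h) ->
  Dage D0 h = (k + m)%N /\
  forall d, (0 < d)%N ->
    Prob lam p pol d0 (t + m)
      (fun w => (hist d0 w (t + m) == h) && (age_at d0 w (t + m) == d))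
    / Prob lam p pol d0 (t + m) (fun w => hist d0 w (t + m) == h)
    = cvec lam k m d.
Proof.
move=> _ _ _ k_gt0 m_gt0 size_h observed_t unobserved Prob_h_gt0.
split; first exact: Dage_observed_at size_h observed_t unobserved.
move=> d _; rewrite (Prob_hist _ _ _ _ m_gt0 observed_t unobserved) in Prob_h_gt0 *.
rewrite (Prob_hist_age _ _ _ _ m_gt0 observed_t unobserved (pred1 d)).
by rewrite mulrC mulKf ?gt_eqF // age_after_distribution.
Qed.
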